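(* Let $S$ be a sectoroid. Consider the sheaf of $\mathbb{C}$-vector spaces $\mathcal{F}:=\bigoplus_{c\in\mathbb{C}}\mathbb{C}_{S^\vee+c}$ on $\mathbb{C}_t$, with the $\mathbb{C}_a$-equivariant structure given by the direct sum of the canonical isomorphisms $T_a^{-1}\mathbb{C}_{S^\vee+c}\cong\mathbb{C}_{S^\vee+c-a}$. Then the ring of endomorphisms of $\mathcal{F}$ in the abelian category of $\mathbb{C}_a$-equivariant sheaves of $\mathbb{C}$-vector spaces on $\mathbb{C}_t$ is isomorphic to $\Lambda_0^S$; the isomorphism sends $T^d$ ($d\in S^\vee$) to the direct sum over $c\in\mathbb{C}$ of the morphisms $\mathbb{C}_{S^\vee+c}\to\mathbb{C}_{S^\vee+c+d}$ which are the identity on $S^\vee+c+d$.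
   Context: For a sectoroid $S$ (an open subset of the real oriented blow-up $\widetilde{\mathbb{C}}_\hbar$ of $\mathbb{C}_\hbar$ at $0$ that is a union of open sectors $\{(z,\theta):0\le|z|<\epsilon,\theta_1<\theta<\theta_2\}$), let $S^\circ$ be its part over $\hbar\neq0$, $\mathrm{Cone}(S)=\{h\in\mathbb{C}: rh\in\varpi(S^\circ)\text{ for some }r>0\}$, and $S^\vee=\{a\in\mathbb{C}:\Re(a\overline b)\ge0\ \forall b\in\mathrm{Cone}(S)\}$, a closed convex cone containing no line. $\Lambda_0^S$ is the ring of formal sums $\sum_{c\in S^\vee}a_cT^c$ ($a_c\in\mathbb{C}$) such that for every compact $K\subset\mathbb{C}$ only finitely many $c\in K$ have $a_c\ne0$, with multiplication $T^cT^d=T^{c+d}$ extended by convolution. $\mathbb{C}_Z$ denotes the constant sheaf on a closed set $Z$ extended by zero. $\mathbb{C}_t$ is the complex plane, $\mathbb{C}_a$ is $\mathbb{C}$ regarded as a discrete additive group acting on $\mathbb{C}_t$ by translations $T_a(t)=t+a$; a $\mathbb{C}_a$-equivariant sheaf is a sheaf $\mathcal{F}$ with isomorphisms $T_a^{-1}\mathcal{F}\cong\mathcal{F}$ satisfying the cocycle condition, and morphisms are those compatible with these isomorphisms. *)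

From HB Require Import structures.
From mathcomp Require Import all_boot all_order all_algebra.
From mathcomp Require Import all_classical all_reals all_analysis.
From mathcomp Require Import complex.

Set Implicit Arguments.
Unset Strict Implicit.
Unset Printing Implicit Defensive.
Import Order.TTheory GRing.Theory Num.Theory.
Local Open Scope classical_set_scope.
Local Open Scope ring_scope.

Section Sectoroids.
Variable R : realType.
Local Notation C := R[i].

Definition cmod (z : C) : R := Num.sqrt (complex.Re z ^+ 2 + complex.Im z ^+ 2).

Definition is_openC (U : set C) : Prop :=
  forall z, U z -> exists e : R, 0 < e /\ forall w, cmod (w - z) < e -> U w.

(* An open sector {(z,theta) : 0 <= |z| < eps, th1 < theta < th2}
   of the real oriented blow-up, given by its data (eps, th1, th2). *)
Record sector := Sector { sec_eps : R; sec_th1 : R; sec_th2 : R }.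

Definition sector_ok (s : sector) : Prop :=
  0 < sec_eps s /\ sec_th1 s < sec_th2 s.

Definition in_sector_punct (s : sector) (z : C) : Prop :=
  0 < cmod z < sec_eps s /\
  exists th : R, sec_th1 s < th < sec_th2 s /\
     z = Complex (cmod z * cos th) (cmod z * sin th).

(* A sectoroid S is a (nonempty) union of open sectors; it is given by the
   family Sig of sectors whose union it is. *)
Definition sectoroid (Sig : set sector) : Prop :=
  Sig !=set0 /\ forall s, Sig s -> sector_ok s.

(* varpi(S^circ) : the part of S over hbar <> 0, viewed in C *)
Definition Scirc (Sig : set sector) : set C :=
  [set z | exists s, Sig s /\ in_sector_punct s z].

Definition Cone (Sig : set sector) : set C :=
  [set h | exists r : R, 0 < r /\ Scirc Sig (r%:C%C * h)].

Definition Sdual (Sig : set sector) : set C :=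
  [set a | forall b, Cone Sig b -> 0 <= complex.Re (a * (b^*)%C)].

(* Lambda_0^S : formal sums sum_c a_c T^c encoded by their coefficient
   function c |-> a_c; support in S^vee and locally finite (finitely many
   nonzero coefficients in every compact set, i.e. in every closed disc). *)
Definition Lambda0 (Sig : set sector) (f : C -> C) : Prop :=
  (forall c, f c != 0 -> Sdual Sig c) /\
  (forall n : R, finite_set [set c | cmod c <= n /\ f c != 0]).

(* product of Lambda_0^S: convolution, T^c T^d = T^(c+d) *)
Definition lam_conv (f g : C -> C) : C -> C :=
  fun e => \sum_(c \in [set: C]) (f c * g (e - c)).

Definition monom (d : C) : C -> C := fun c => if c == d then 1 else 0.

(* A section of F over an open U is encoded as s : C -> C -> C, where
   s t c is the value at t of its component in C_{S^vee + c}
   (set to 0 outside U).  Conditions: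
   - component c is supported in U /\ (S^vee + c);
   - component c is locally constant on U /\ (S^vee + c)
     (sections of C_Z over U = locally constant functions on U /\ Z);
   - locally only finitely many components are nonzero (sections of the
     sheaf direct sum are locally finite sums). *)
Definition is_section (Sig : set sector) (U : set C) (s : C -> C -> C) : Prop :=
  [/\ (forall t c, s t c != 0 -> U t /\ Sdual Sig (t - c)),
      (forall t c, U t -> Sdual Sig (t - c) ->
         exists e : R, 0 < e /\
           forall t', cmod (t' - t) < e -> Sdual Sig (t' - c) -> s t' c = s t c) &
      (forall t, U t -> exists e : R, 0 < e /\
         finite_set [set c | exists t', cmod (t' - t) < e /\ s t' c != 0])].

Record opens := Opens { oset : set C; oset_open : is_openC oset }.

Record section (Sig : set sector) (U : opens) := Section_ {
  sfun :> C -> C -> C;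
  sfunP : is_section Sig (oset U) sfun }.

Definition endo (Sig : set sector) := forall U : opens, section Sig U -> section Sig U.

(* phi is an endomorphism of F in the category of C_a-equivariant sheaves of
   C-vector spaces: C-linear on each F(U), compatible with restrictions, and
   compatible with the equivariant structure
   T_a^{-1} C_{S^vee+c} ~ C_{S^vee+c-a}, i.e. with s |-> s'(t,c) = s(t+a,c+a)
   from F(U+a) to F(U). *)
Definition is_equiv_endo (Sig : set sector) (phi : endo Sig) : Prop :=
  [/\ (forall (U : opens) (s1 s2 s3 : section Sig U) (k : C),
         (forall t c, s3 t c = k * s1 t c + s2 t c) ->
         forall t c, phi U s3 t c = k * phi U s1 t c + phi U s2 t c),
      (forall U V : opens, oset V `<=` oset U ->
         forall (s : section Sig U) (s' : section Sig V),
         (forall t c, oset V t -> s' t c = s t c) ->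
         forall t c, oset V t -> phi V s' t c = phi U s t c) &
      (forall (a : C) (U U' : opens), (forall t, oset U' (t + a) <-> oset U t) ->
         forall (s : section Sig U') (s' : section Sig U),
         (forall t c, s' t c = s (t + a) (c + a)) ->
         forall t c, phi U s' t c = phi U' s (t + a) (c + a))].

Definition endo_eq (Sig : set sector) (phi psi : endo Sig) : Prop :=
  forall U s t c, phi U s t c = psi U s t c.

(* phi is the direct sum over c of the morphisms C_{S^vee+c} -> C_{S^vee+c+d}
   that are the identity on S^vee+c+d *)
Definition shift_morph (Sig : set sector) (d : C) (phi : endo Sig) : Prop :=
  forall U s t e, phi U s t e = if `[< Sdual Sig (t - e) >] then s t (e - d) else 0.

End Sectoroids.

From HB Require Import structures.
From mathcomp Require Import all_boot all_order all_algebra.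
From mathcomp Require Import all_classical all_reals all_analysis.
From mathcomp Require Import complex.
From mathcomp Require Import ring lra.
From mathcomp Require Import finmap.
Import Order.TTheory GRing.Theory Num.Theory.
Local Open Scope classical_set_scope.
Local Open Scope ring_scope.

Set Implicit Arguments.
Unset Strict Implicit.

(* An equivariant endomorphism [phi] is determined by the image of the
   generator of the summand [C_{S^vee}] over the whole plane.  Each component
   of that image is a locally constant function on a translate of the closed
   convex cone [S^vee], hence constant there, so it is described by one
   coefficient [a_e] per summand [e].  Since a section is locally a finite sum
   of translated generators, linearity, restriction and equivariance give
   [phi(s)_e = sum_c s_c a_(e-c)], i.e. [phi] is convolution by [sum a_e T^e];
   local finiteness of the image turns into local finiteness of [a] by
   compactness of discs.  Conversely convolution by any [a] in [Lambda_0^S] is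
   an equivariant endomorphism: its values are locally finite because [S^vee]
   is salient ([z, p - z] in [S^vee] forces [|z| <= M |p|]). *)


Section ComplexModulus.
Local Open Scope complex_scope.
Variable R : realType.
Local Notation C := R[i].
Implicit Types z w : C.

Lemma cmodE z : (cmod z)%:C = `|z|.
Proof. by rewrite normc_def. Qed.

Lemma cmod_ge0 z : 0 <= cmod z.
Proof. exact: sqrtr_ge0. Qed.

Lemma cmodD z w : cmod (z + w) <= cmod z + cmod w.
Proof. by rewrite -lecR rmorphD /= !cmodE ler_normD. Qed.

Lemma cmodN z : cmod (- z) = cmod z.
Proof. by apply: complexI; rewrite !cmodE normrN. Qed.

Lemma cmodM z w : cmod (z * w) = cmod z * cmod w.
Proof. by apply: complexI; rewrite rmorphM /= !cmodE normrM. Qed.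

Lemma cmodJ z : cmod (z^*) = cmod z.
Proof. by case: z => u v; rewrite /cmod /= sqrrN. Qed.

Lemma cmod0 : cmod (0 : C) = 0.
Proof. by rewrite /cmod /= expr0n /= addr0 sqrtr0. Qed.

Lemma cmodR (r : R) : cmod r%:C = `|r|.
Proof. by rewrite /cmod /= expr0n /= addr0 sqrtr_sqr. Qed.

Lemma ReD z w : complex.Re (z + w) = complex.Re z + complex.Re w.
Proof. by case: z w => x y [u v]. Qed.

Lemma ImD z w : complex.Im (z + w) = complex.Im z + complex.Im w.
Proof. by case: z w => x y [u v]. Qed.

Lemma ReB z w : complex.Re (z - w) = complex.Re z - complex.Re w.
Proof. by case: z w => x y [u v]. Qed.

Lemma ImB z w : complex.Im (z - w) = complex.Im z - complex.Im w.
Proof. by case: z w => x y [u v]. Qed.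

Lemma ReMJ z w : complex.Re (z * w^*) =
  complex.Re z * complex.Re w + complex.Im z * complex.Im w.
Proof. by case: z w => x y [u v] /=; rewrite mulrN opprK. Qed.

Lemma normRe_le_cmod z : `|complex.Re z| <= cmod z.
Proof.
rewrite /cmod -(sqrtr_sqr (complex.Re z)) ler_sqrt ?addr_ge0 ?sqr_ge0 //.
by rewrite lerDl sqr_ge0.
Qed.

Lemma normIm_le_cmod z : `|complex.Im z| <= cmod z.
Proof.
rewrite /cmod -(sqrtr_sqr (complex.Im z)) ler_sqrt ?addr_ge0 ?sqr_ge0 //.
by rewrite lerDr sqr_ge0.
Qed.

Lemma cmod_le_normReIm z : cmod z <= `|complex.Re z| + `|complex.Im z|.
Proof.
have h : 0 <= `|complex.Re z| + `|complex.Im z| by rewrite addr_ge0.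
rewrite /cmod -(ger0_norm h) -(sqrtr_sqr (_ + _)).
rewrite ler_sqrt ?sqr_ge0 // sqrrD -(real_normK (num_real (complex.Re z))).
rewrite -(real_normK (num_real (complex.Im z))).
by rewrite lerD2r lerDl mulrn_wge0 // mulr_ge0.
Qed.

Lemma ReMJ_le z w : complex.Re (z * w^*) <= cmod z * cmod w.
Proof. by rewrite -(cmodJ w) -cmodM; apply: le_trans (ler_norm _) (normRe_le_cmod _). Qed.

Lemma is_openC_ball (t : C) rho : is_openC [set z | cmod (z - t) < rho].
Proof.
move=> z /= hz; exists (rho - cmod (z - t)); split; first by rewrite subr_gt0.
move=> w hw; have := cmodD (w - z) (z - t); rewrite addrA subrK => h.
by apply: (le_lt_trans h); rewrite -ltrBrDr.
Qed.

End ComplexModulus.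

Section SegmentInduction.
Variable R : realType.

(* Consider the supremum of the right ends [m] for which [P a m] holds. *)
Lemma segment_ind (P : R -> R -> Prop) a b : a <= b ->
  (forall l r l' r', P l r -> l <= l' -> r' <= r -> P l' r') ->
  (forall l m m' r, a <= m <= b -> m' <= m -> P l m -> P m' r -> P l r) ->
  (forall x, a <= x <= b -> exists2 d, 0 < d & P (x - d) (x + d)) ->
  P a b.
Proof.
move=> ab mono glue loc.
pose E := [set m | a <= m <= b /\ P a m].
have Ea : E a.
  split; first by rewrite lexx ab.
  have [d d0 Pd] := loc a (ltac:(by rewrite lexx ab)).
  by apply: (mono _ _ _ _ Pd); rewrite ?lerBlDr ?lerDl ?ltW.
have hsE : has_sup E by split; [exists a | exists b => m [/andP[]]].
set s := sup E.
have as_ : a <= s by apply: sup_upper_bound.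
have sb : s <= b by apply: ge_sup; [exists a | move=> m [/andP[]]].
have [d d0 Pd] := loc s (ltac:(by rewrite as_ sb)).
have [m [/andP[am mb] Pam] sdm] := sup_adherent d0 hsE.
have Pas : P a (s + d).
  by apply: (glue a m (s - d)) => //; [rewrite am mb | exact: ltW].
have d2 : s + d / 2 <= s + d by rewrite lerD2l ler_pdivrMr // ler_pMr // ler1n.
have [bsd|sdb] := lerP b (s + d / 2).
  by apply: (mono _ _ _ _ Pas); rewrite ?lexx // (le_trans bsd).
have : E (s + d / 2).
  split; first by rewrite (le_trans as_) ?lerDl ?divr_ge0 ?ltW // sdb.
  by apply: (mono _ _ _ _ Pas); rewrite ?lexx.
move/(sup_upper_bound hsE); rewrite -/s.
by rewrite gerDl leNgt divr_gt0.
Qed.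

End SegmentInduction.

Section LocallyFinite.
Local Open Scope complex_scope.
Variable R : realType.
Local Notation C := R[i].
Variable A : set C.
Hypothesis A_locfin :
  forall t, exists2 e, 0 < e & finite_set (A `&` [set c | cmod (c - t) < e]).
Variable N : R.
Hypothesis N_ge0 : 0 <= N.

Let NN : - N <= N.
Proof. by rewrite -subr_ge0 opprK addr_ge0. Qed.

Lemma locally_finite_vstrip x : exists2 w, 0 < w & finite_set (A `&`
  [set c | `|complex.Re c - x| < w /\ - N <= complex.Im c <= N]).
Proof.
pose P l r := exists2 w, 0 < w & finite_set (A `&`
  [set c | `|complex.Re c - x| < w /\ l <= complex.Im c <= r]).
apply: (@segment_ind R P); first exact: NN.
- move=> l r l' r' [w w0 fw] ll' rr'; exists w => //.
  apply: sub_finite_set fw => c [Ac [h1 /andP[h2 h3]]]; split => //; split => //.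
  by rewrite (le_trans ll' h2) (le_trans h3 rr').
- move=> l m m' r _ m'm [w1 w10 f1] [w2 w20 f2]; exists (Num.min w1 w2).
    by rewrite lt_min w10 w20.
  apply: (sub_finite_set (B := (A `&` [set c | `|complex.Re c - x| < w1 /\
    l <= complex.Im c <= m]) `|` (A `&` [set c | `|complex.Re c - x| < w2 /\
    m' <= complex.Im c <= r]))); last by rewrite finite_setU.
  move=> c [Ac [h1 /andP[h2 h3]]]; move: h1; rewrite lt_min => /andP[h1 h1'].
  have [cm|mc] := lerP (complex.Im c) m; [left|right]; split => //; split => //.
    by rewrite h2 cm.
  by rewrite h3 (le_trans m'm) ?ltW.
- move=> y _; have [e e0 fe] := A_locfin (x +i* y); exists (e / 2).
    by rewrite divr_gt0.
  exists (e / 2); first by rewrite divr_gt0.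
  apply: sub_finite_set fe => c [Ac [h1 h2]]; split => //=.
  apply: (le_lt_trans (cmod_le_normReIm _)); rewrite ReB ImB /=.
  rewrite -ler_distl in h2.
  by rewrite [e]splitr ltr_leD.
Qed.

Lemma locally_finite_square : finite_set (A `&`
  [set c | - N <= complex.Re c <= N /\ - N <= complex.Im c <= N]).
Proof.
pose P l r := finite_set (A `&` [set c | l <= complex.Re c <= r /\
  - N <= complex.Im c <= N]).
apply: (@segment_ind R P); first exact: NN.
- move=> l r l' r' fw ll' rr'.
  apply: sub_finite_set fw => c [Ac [/andP[h2 h3] h4]]; split => //; split => //.
  by rewrite (le_trans ll' h2) (le_trans h3 rr').
- move=> l m m' r _ m'm f1 f2.
  apply: (sub_finite_set (B := (A `&` [set c | l <= complex.Re c <= m /\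
    - N <= complex.Im c <= N]) `|` (A `&` [set c | m' <= complex.Re c <= r /\
    - N <= complex.Im c <= N]))); last by rewrite finite_setU.
  move=> c [Ac [/andP[h2 h3] h4]].
  have [cm|mc] := lerP (complex.Re c) m; [left|right]; split => //; split => //.
    by rewrite h2 cm.
  by rewrite h3 (le_trans m'm) ?ltW.
- move=> x _; have [w w0 fw] := locally_finite_vstrip x; exists (w / 2).
    by rewrite divr_gt0.
  apply: sub_finite_set fw => c [Ac [h1 h2]]; split => //; split => //.
  rewrite -ler_distl in h1; apply: (le_lt_trans h1).
  by rewrite ltr_pdivrMr // ltr_pMr // ltr1n.
Qed.

End LocallyFinite.

Lemma locally_finite_disc (R : realType) (A : set R[i]) :
  (forall t, exists2 e, 0 < e & finite_set (A `&` [set c | cmod (c - t) < e])) ->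
  forall n : R, finite_set (A `&` [set c | cmod c <= n]).
Proof.
move=> A_locfin n; have N0 : 0 <= `|n| := normr_ge0 n.
apply: sub_finite_set (locally_finite_square A_locfin N0) => c [Ac cn].
have cN := le_trans cn (ler_norm n).
have := le_trans (normRe_le_cmod c) cN; have := le_trans (normIm_le_cmod c) cN.
by rewrite !ler_norml.
Qed.

Section DualCone.
Local Open Scope complex_scope.
Variable R : realType.
Local Notation C := R[i].
Variable Sig : set (sector R).
Local Notation Z := (Sdual Sig).

Lemma Sdual0 : Z 0.
Proof. by move=> b _; rewrite mul0r. Qed.

Lemma SdualD a b : Z a -> Z b -> Z (a + b).
Proof.
move=> Za Zb c Cc; rewrite ReMJ ReD ImD !mulrDl addrACA -!ReMJ.
by rewrite addr_ge0 ?Za ?Zb.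
Qed.

Lemma SdualZ (r : R) a : 0 <= r -> Z a -> Z (r%:C * a).
Proof.
move=> r0 Za c Cc; rewrite ReMJ.
have -> : complex.Re (r%:C * a) = r * complex.Re a.
  by case: a {Za} => x y /=; rewrite mul0r subr0.
have -> : complex.Im (r%:C * a) = r * complex.Im a.
  by case: a {Za} => x y /=; rewrite mul0r addr0.
by rewrite -!mulrA -mulrDr -ReMJ mulr_ge0 ?Za.
Qed.

Lemma notSdual_nbhs a : ~ Z a ->
  exists2 e, 0 < e & forall a', cmod (a' - a) < e -> ~ Z a'.
Proof.
move=> /existsNP [b /not_implyP [Cb]] /negP; rewrite -ltNge => hb.
exists (- complex.Re (a * b^*) / (cmod b + 1)).
  by rewrite divr_gt0 ?oppr_gt0 // ltr_wpDl ?cmod_ge0.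
move=> a' ha Za'; have := Za' b Cb.
have -> : a' = a + (a' - a) by rewrite addrC subrK.
rewrite mulrDl ReD; apply/negP; rewrite -ltNge.
rewrite -ltrBrDl sub0r; apply: (le_lt_trans (ReMJ_le _ _)).
rewrite ltr_pdivlMr ?ltr_wpDl ?cmod_ge0 // in ha.
by apply: le_lt_trans ha; rewrite ler_wpM2l ?cmod_ge0 // lerDl.
Qed.

Lemma is_openC_notSdual : is_openC (~` Z).
Proof. by move=> z /notSdual_nbhs [e e0 he]; exists e. Qed.

Lemma cmod_expi (th : R) : cmod (cos th +i* sin th) = 1.
Proof. by rewrite /cmod /= cos2Dsin2 sqrtr1. Qed.

Lemma Cone_expi (s : sector R) th : Sig s -> sector_ok s ->
  sec_th1 s < th < sec_th2 s -> Cone Sig (cos th +i* sin th).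
Proof.
move=> Ss [e0 _] hth; exists (sec_eps s / 2); split; first by rewrite divr_gt0.
exists s; split => //.
have hc : cmod ((sec_eps s / 2)%:C * (cos th +i* sin th)) = sec_eps s / 2.
  by rewrite cmodM cmod_expi mulr1 cmodR ger0_norm // divr_ge0 // ltW.
split; first by rewrite hc divr_gt0 //= ltr_pdivrMr // ltr_pMr // ltr1n.
exists th; split => //; rewrite hc /=.
by apply/eqP; rewrite eq_complex /= !mul0r subr0 addr0 !eqxx.
Qed.

Lemma Cone_two_expi : sectoroid Sig -> exists th1 th2 : R,
  [/\ Cone Sig (cos th1 +i* sin th1), Cone Sig (cos th2 +i* sin th2)
    & 0 < sin (th2 - th1)].
Proof.
move=> [[s Ss] okS]; have [e0 t12] := okS s Ss.
set t1 := sec_th1 s in t12 *; set t2 := sec_th2 s in t12 *.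
set d := Num.min ((t2 - t1) / 3%:R) 1.
have d0 : 0 < d by rewrite lt_min ltr01 divr_gt0 // subr_gt0.
have d1 : d <= 1 by rewrite ge_min lexx orbT.
have d3 : d <= (t2 - t1) / 3%:R by rewrite ge_min lexx.
exists (t1 + d), (t1 + d + d); split.
- by apply: Cone_expi Ss (okS s Ss) _; rewrite -/t1 -/t2; apply/andP; split; lra.
- by apply: Cone_expi Ss (okS s Ss) _; rewrite -/t1 -/t2; apply/andP; split; lra.
rewrite (_ : _ - _ = d); last by ring.
rewrite sin_gt0_pi // d0 /= (le_lt_trans d1) //.
by rewrite (lt_le_trans _ (@pi_ge2 R)) // ltr1n.
Qed.

(* Pairing [z] and [p - z] with two independent directions of the cone bounds
   both real coordinates of [z] by [|p|]. *)
Lemma Sdual_salient : sectoroid Sig -> exists2 M, 0 <= M &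
  forall z p, Z z -> Z (p - z) -> cmod z <= M * cmod p.
Proof.
move=> /Cone_two_expi [th1 [th2 [C1 C2 D0]]].
rewrite sinB in D0; set D := _ - _ in D0.
exists (4%:R / D); first by rewrite divr_ge0 // ltW.
move=> z p Zz Zpz.
have pairing th : Cone Sig (cos th +i* sin th) ->
    0 <= complex.Re z * cos th + complex.Im z * sin th <= cmod p.
  move=> Cb; set b := cos th +i* sin th.
  have hz : 0 <= complex.Re (z * b^*) := Zz _ Cb.
  have hpz : 0 <= complex.Re ((p - z) * b^*) := Zpz _ Cb.
  have hp := ReMJ_le p b.
  rewrite cmod_expi mulr1 ReMJ /= in hp; rewrite ReMJ /= in hz.
  rewrite ReMJ ReB ImB /= in hpz.
  by apply/andP; split; lra.
have /andP[u10 u1p] := pairing _ C1; have /andP[u20 u2p] := pairing _ C2.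
set x := complex.Re z in u10 u1p u20 u2p *.
set y := complex.Im z in u10 u1p u20 u2p *.
have bound (u c : R) : 0 <= u <= cmod p -> `|c| <= 1 -> `|u * c| <= cmod p.
  move=> /andP[u0 up] c1; rewrite normrM ger0_norm //.
  by rewrite -[X in _ <= X]mulr1 ler_pM.
have hx : `|x| * D <= cmod p + cmod p.
  rewrite -(ger0_norm (ltW D0)) -normrM.
  have -> : x * D = (x * cos th1 + y * sin th1) * sin th2 -
      (x * cos th2 + y * sin th2) * sin th1 by rewrite /D; ring.
  apply: le_trans (ler_normB _ _) _.
  by rewrite lerD // bound ?u10 ?u1p ?u20 ?u2p ?sin_max.
have hy : `|y| * D <= cmod p + cmod p.
  rewrite -(ger0_norm (ltW D0)) -normrM.
  have -> : y * D = cos th1 * (x * cos th2 + y * sin th2) -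
      cos th2 * (x * cos th1 + y * sin th1) by rewrite /D; ring.
  apply: le_trans (ler_normB _ _) _.
  by rewrite ![cos _ * _]mulrC lerD // bound ?u10 ?u1p ?u20 ?u2p ?cos_max.
apply: (le_trans (cmod_le_normReIm z)); rewrite -/x -/y mulrAC ler_pdivlMr //.
rewrite mulrDl; lra.
Qed.

End DualCone.

Lemma common_radius (R : realDomainType) (T : eqType) (L : seq T)
    (Q : T -> R -> Prop) :
  (forall c r r', Q c r -> 0 < r' -> r' <= r -> Q c r') ->
  (forall c, c \in L -> exists2 r, 0 < r & Q c r) ->
  exists2 rho, 0 < rho & forall c, c \in L -> Q c rho.
Proof.
move=> mono; elim: L => [|c L IH] h; first by exists 1.
have [r r0 Qr] := h c (mem_head _ _).
have [rho rho0 Qrho] := IH (fun x xL => h x (ltac:(by rewrite in_cons xL orbT))).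
exists (Num.min r rho); first by rewrite lt_min r0 rho0.
move=> x; rewrite in_cons => /orP[/eqP->|xL].
  by apply: mono Qr _ _; rewrite ?lt_min ?r0 ?rho0 // ge_min lexx.
by apply: mono (Qrho x xL) _ _; rewrite ?lt_min ?r0 ?rho0 // ge_min lexx orbT.
Qed.

Section Sections.
Local Open Scope complex_scope.
Variable R : realType.
Local Notation C := R[i].
Variable Sig : set (sector R).
Local Notation Z := (Sdual Sig).

Lemma is_openC_setT : is_openC (@setT C).
Proof. by move=> z _; exists 1; split. Qed.

Definition planeT : opens R := Opens is_openC_setT.

(* [k] times the generator of the summand [C_{S^vee + c0}] *)
Definition gen_fun (k c0 : C) : C -> C -> C :=
  fun t c => if (c == c0) && `[< Z (t - c0) >] then k else 0.

Lemma is_section_gen k c0 : is_section Sig setT (gen_fun k c0).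
Proof.
split.
- move=> t c; rewrite /gen_fun; case: ifP => [/andP[/eqP -> /asboolP hZ] _|].
    by split.
  by rewrite eqxx.
- move=> t c _ Ztc; exists 1; split => // t' _ Zt'c; rewrite /gen_fun.
  by case: (c =P c0) => [E|] //=; subst c0; rewrite !asboolT.
- move=> t _; exists 1; split => //; apply: sub_finite_set (finite_set1 c0).
  by move=> c [t' [_]]; rewrite /gen_fun; case: (c =P c0) => //=; rewrite eqxx.
Qed.

Definition gen k c0 : section Sig planeT :=
  @Section_ R Sig planeT (gen_fun k c0) (is_section_gen k c0).

Lemma is_section0 (U : opens R) : is_section Sig (oset U) (fun _ _ => 0).
Proof.
split.
- by move=> t c; rewrite eqxx.
- by move=> t c _ _; exists 1; split.
move=> t _; exists 1; split => //; apply: sub_finite_set (@finite_set0 C).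
by move=> c [t' [_]]; rewrite eqxx.
Qed.

Definition sec0 U : section Sig U := Section_ (is_section0 U).

Definition restr (U : opens R) (s : section Sig U) (V : opens R) (P : set C) :=
  fun t c => if `[< oset V t /\ P c >] then s t c else 0.

Lemma is_section_restr (U V : opens R) (s : section Sig U) P :
  oset V `<=` oset U -> is_section Sig (oset V) (restr s V P).
Proof.
move=> VU; case: (sfunP s) => h1 h2 h3; split.
- move=> t c; rewrite /restr; case: asboolP => [[Vt Pc] /h1 [] //|]; by rewrite eqxx.
- move=> t c Vt Ztc; rewrite /restr; case: (asboolP (oset V t /\ P c)); last first.
    move=> nP; exists 1; split => // t' _ _; case: asboolP => [[_ Pc]|//].
    by case: nP.
  move=> [_ Pc]; have [e [e0 he]] := h2 t c (VU _ Vt) Ztc.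
  have [e' [e'0 he']] := oset_open Vt.
  exists (Num.min e e'); split; first by rewrite lt_min e0 e'0.
  move=> t' ht' Zt'c; rewrite lt_min in ht'; case/andP: ht' => ht1 ht2.
  case: asboolP => [_|[]]; first exact: he.
  by split => //; apply: he'.
- move=> t Vt; have [e [e0 he]] := h3 t (VU _ Vt); exists e; split => //.
  apply: sub_finite_set he => c [t' [ht']]; rewrite /restr.
  by case: asboolP => [_ ?|]; [exists t' | rewrite eqxx].
Qed.

Definition sec_restr (U V : opens R) (s : section Sig U) P
  (VU : oset V `<=` oset U) : section Sig V := Section_ (is_section_restr s P VU).

Lemma section_local_fset (U : opens R) (s : section Sig U) t : oset U t ->
  exists2 e, 0 < e & exists G : {fset C},
    forall t' c, cmod (t' - t) < e -> s t' c != 0 -> c \in G.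
Proof.
case: (sfunP s) => _ _ hfin /hfin [e [e0 fin]]; exists e => //.
have [G GE] := finite_fsetP.1 fin; exists G => t' c ht' sne.
by have : [set` G] c by rewrite -GE; exists t'.
Qed.

Lemma section_fset (U : opens R) (s : section Sig U) t :
  exists G : {fset C}, forall c, s t c != 0 -> c \in G.
Proof.
have [Ut|nUt] := pselect (oset U t); last first.
  by exists fset0 => c; case: (sfunP s) => hsupp _ _ /hsupp [].
have [e e0 [G hG]] := section_local_fset s Ut; exists G => c.
by apply: hG; rewrite subrr cmod0.
Qed.

Lemma section_locally_gen (U : opens R) (s : section Sig U) t (L : seq C) :
  oset U t -> exists2 rho, 0 < rho & forall c, c \in L ->
    forall t', cmod (t' - t) < rho -> s t' c = gen_fun (s t c) c t' c.
Proof.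
case: (sfunP s) => hsupp hconst _ Ut.
apply: common_radius => [c r r' Qr _ r'r t' ht'|c _].
  exact: Qr t' (lt_le_trans ht' r'r).
case: (pselect (Z (t - c))) => Ztc.
- have [r [r0 hr]] := hconst t c Ut Ztc; exists r => // t' ht'.
  rewrite /gen_fun eqxx /=; case: asboolP => [Z'|nZ']; first exact: hr.
  by apply/eqP; apply: contraT => /hsupp [_ /nZ'].
- have [r r0 hr] := notSdual_nbhs Ztc; exists r => // t' ht'.
  have st0 : s t c = 0 by apply/eqP; apply: contraT => /hsupp [_ /Ztc].
  have st'0 : s t' c = 0.
    apply/eqP; apply: contraT => /hsupp [_ Z']; exfalso; apply: (hr (t' - c) _ Z').
    by rewrite opprB addrA subrK.
  by rewrite st0 st'0 /gen_fun; case: ifP.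
Qed.

End Sections.

Section Endomorphism.
Local Open Scope complex_scope.
Variable R : realType.
Local Notation C := R[i].
Variable Sig : set (sector R).
Local Notation Z := (Sdual Sig).
(* Declared without implicit arguments, so that the open set stays an
   explicit argument of [phi]. *)
Unset Implicit Arguments.
Variable phi : endo Sig.
Set Implicit Arguments.
Hypothesis phi_equiv : is_equiv_endo phi.

Lemma endo_supp (U : opens R) (s : section Sig U) t c :
  phi U s t c != 0 -> oset U t /\ Z (t - c).
Proof. by case: (sfunP (phi U s)) => hsupp _ _; apply: hsupp. Qed.

Lemma endo_lin U (s1 s2 s3 : section Sig U) k :
  (forall t c, s3 t c = k * s1 t c + s2 t c) ->
  forall t c, phi U s3 t c = k * phi U s1 t c + phi U s2 t c.
Proof. by case: phi_equiv => h _ _; apply: h. Qed.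

Lemma endo_restr (U V : opens R) (s : section Sig U) (s' : section Sig V) :
  oset V `<=` oset U -> (forall t c, oset V t -> s' t c = s t c) ->
  forall t c, oset V t -> phi V s' t c = phi U s t c.
Proof. by move=> VU; case: phi_equiv => _ h _; apply: h. Qed.

Lemma endo_transl a (U U' : opens R) : (forall t, oset U' (t + a) <-> oset U t) ->
  forall (s : section Sig U') (s' : section Sig U),
  (forall t c, s' t c = s (t + a) (c + a)) ->
  forall t c, phi U s' t c = phi U' s (t + a) (c + a).
Proof. by case: phi_equiv => _ _ h; apply: h. Qed.

Lemma endo0 U (s : section Sig U) : (forall t c, s t c = 0) ->
  forall t c, phi U s t c = 0.
Proof.
move=> s0 t c; have := @endo_lin U s s s 1 _ t c.
rewrite mul1r => /(_ (fun t c => ltac:(by rewrite !s0 mulr0 addr0))) h.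
by have := congr1 (fun y => y - phi U s t c) h; rewrite subrr addrK => /esym.
Qed.

Definition endo_coef t e := phi (planeT R) (gen Sig 1 0) t e.

Lemma endo_gen k c t e : phi (planeT R) (gen Sig k c) t e = k * endo_coef (t - c) (e - c).
Proof.
have -> : phi (planeT R) (gen Sig k c) t e = phi (planeT R) (gen Sig k 0) (t - c) (e - c).
  rewrite (@endo_transl c (planeT R) (planeT R) _ (gen Sig k c) (gen Sig k 0)) ?subrK //.
  move=> t' c'; rewrite /= /gen_fun subr0 addrK.
  by have -> : (c' + c == c) = (c' == 0) by rewrite -subr_eq0 addrK.
rewrite /endo_coef (@endo_lin (planeT R) (gen Sig 1 0) (sec0 Sig (planeT R)) (gen Sig k 0) k).
  by rewrite (@endo0 (planeT R) (sec0 Sig (planeT R))) ?addr0.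
by move=> t' c'; rewrite /= /gen_fun; case: ifP; rewrite ?mulr1 ?mulr0 addr0.
Qed.

Lemma endo_coef_supp t e : endo_coef t e != 0 -> Z (t - e).
Proof. by case/endo_supp. Qed.

Lemma endo_coef_supp_Sdual t e : endo_coef t e != 0 -> Z t.
Proof.
apply: contraNP => nZ; apply/eqP; pose V := Opens (@is_openC_notSdual R Sig).
rewrite /endo_coef -(@endo_restr (planeT R) V (gen Sig 1 0) (sec0 Sig V)) //.
- by rewrite (@endo0 V (sec0 Sig V)).
- by move=> t' c' Vt'; rewrite /= /gen_fun subr0 asboolF // andbF.
Qed.

Lemma endo_coef_segment_local e w x : Z w -> 0 <= x -> exists2 d, 0 < d &
  forall y, 0 <= y -> x - d <= y <= x + d ->
    endo_coef (e + y%:C * w) e = endo_coef (e + x%:C * w) e.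
Proof.
move=> Zw x0; set t0 := e + x%:C * w.
have Zt0 : Z (t0 - e) by rewrite /t0 addrC addKr; apply: SdualZ.
case: (sfunP (phi (planeT R) (gen Sig 1 0))) => _ hconst _.
have [r [r0 hr]] := hconst t0 e I Zt0.
have cw0 : 0 < cmod w + 1 by rewrite ltr_wpDl ?cmod_ge0.
exists (r / (cmod w + 1)); first by rewrite divr_gt0.
move=> y y0 hyd; rewrite /endo_coef hr //; last by rewrite addrC addKr; apply: SdualZ.
rewrite (_ : e + y%:C * w - t0 = (y - x)%:C * w); last by rewrite /t0 rmorphB /=; ring.
rewrite cmodM cmodR; apply: (le_lt_trans (y := r / (cmod w + 1) * cmod w)).
  by apply: ler_wpM2r; [exact: cmod_ge0 | rewrite ler_distl].
by rewrite mulrAC ltr_pdivrMr // ltr_pM2l // ltrDl.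
Qed.

(* The segment from [e] to [t] lies in [S^vee + e], and [endo_coef _ e] is
   locally constant there. *)
Lemma endo_coef_const t e : Z (t - e) -> endo_coef t e = endo_coef e e.
Proof.
move=> Zw; set w := t - e; pose h (x : R) := endo_coef (e + x%:C * w) e.
pose P (l r : R) := forall y z, 0 <= y <= 1 -> 0 <= z <= 1 ->
  l <= y <= r -> l <= z <= r -> h y = h z.
suff P01 : P 0 1.
  have := P01 1 0; rewrite /h mul1r mul0r addr0 /w addrC subrK; apply;
    by rewrite ?ler01 ?lexx.
apply: (@segment_ind R P); first exact: ler01.
- move=> l r l' r' Plr ll' rr' y z hy hz /andP[ly yr] /andP[lz zr].
  by apply: Plr => //; apply/andP; split;
    by [apply: le_trans ll' _ | apply: le_trans _ rr'].
- move=> l m m' r hm m'm Plm Pm'r.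
  have key y : 0 <= y <= 1 -> l <= y <= r -> h y = h m.
    move=> hy /andP[ly yr]; have [ym|my] := lerP y m.
      by apply: Plm; rewrite ?hm ?ly ?ym ?lexx ?(le_trans ly ym).
    by apply: Pm'r;
      rewrite ?hm ?yr ?(le_trans m'm (ltW my)) ?lexx ?(le_trans (ltW my) yr) ?m'm.
  by move=> y z hy hz ly lz; rewrite (key y) ?(key z).
- move=> x /andP[x0 _]; have [d d0 hd] := endo_coef_segment_local e Zw x0.
  exists d => // y z /andP[y0 _] /andP[z0 _] hy hz.
  by rewrite /h !hd.
Qed.

Lemma endo_coefE t e : endo_coef t e = if `[< Z (t - e) >] then endo_coef e e else 0.
Proof.
case: asboolP => [/endo_coef_const //|nZ]; apply/eqP; apply: contraT => /endo_coef_supp.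
by move/nZ.
Qed.

Lemma endo_restr_sum (U V : opens R) (s : section Sig U) (VU : oset V `<=` oset U)
    t e (L : seq C) : oset V t -> uniq L ->
  (forall c, c \in L -> forall t', oset V t' -> s t' c = gen_fun Sig (s t c) c t' c) ->
  phi V (sec_restr s [set c | c \in L] VU) t e =
    \sum_(c <- L) s t c * endo_coef (t - c) (e - c).
Proof.
move=> Vt; elim: L => [|c L IH].
  move=> _ _; rewrite big_nil (@endo0 V) // => t' c'.
  by rewrite /= /restr; case: asboolP => // -[].
rewrite cons_uniq => /andP[cL uL] sgen.
rewrite big_cons -IH //; last by move=> x xL; apply: sgen; rewrite in_cons xL orbT.
rewrite (@endo_lin V (sec_restr s [set c' | c' \in [:: c]] VU)
   (sec_restr s [set c' | c' \in L] VU) (sec_restr s [set c' | c' \in c :: L] VU) 1);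
  last first.
  move=> t' c'; rewrite /= /restr mul1r.
  case: (pselect (oset V t')) => Vt'; last first.
    by do 3 (case: asboolP => [[]|_] //); rewrite addr0.
  have [->|ne] := eqVneq c' c.
    rewrite (@asboolT (oset V t' /\ [set` c :: L] c)); last by rewrite /= mem_head.
    rewrite (@asboolT (oset V t' /\ [set` [:: c]] c)); last by rewrite /= mem_head.
    by rewrite asboolF ?addr0 // => -[_ cL']; rewrite /= cL' in cL.
  rewrite (asboolF (P := oset V t' /\ c' \in [:: c])); last first.
    by case=> _; rewrite /= inE (negbTE ne).
  rewrite add0r; congr (if _ then _ else _); apply/asboolP/asboolP.
    by case=> _; rewrite /= in_cons (negbTE ne).
  by case=> _ h; split => //; rewrite /= in_cons (negbTE ne).
congr (_ + _); rewrite mul1r.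
rewrite (@endo_restr (planeT R) V (gen Sig (s t c) c)) //; first exact: endo_gen.
move=> t' c' Vt'; rewrite /= /restr.
have [->|ne] := eqVneq c' c.
  rewrite (@asboolT (oset V t' /\ [set` [:: c]] c)); last by rewrite /= mem_head.
  by apply: sgen; rewrite ?mem_head.
by rewrite asboolF ?/gen_fun ?(negbTE ne) // => -[_]; rewrite /= inE (negbTE ne).
Qed.

(* Locally a section is a finite sum of translated generators, so linearity,
   restriction and equivariance determine [phi] from [endo_coef]. *)
Lemma endo_expand (U : opens R) (s : section Sig U) t e :
  phi U s t e = \sum_(c \in [set: C]) s t c * endo_coef (t - c) (e - c).
Proof.
have [Ut|nUt] := pselect (oset U t); last first.
  rewrite fsbig1; first by apply/eqP; apply: contraT => /endo_supp [].
  move=> c _; case: (sfunP s) => hsupp _ _.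
  by have [->|/hsupp [] //] := eqVneq (s t c) 0; rewrite mul0r.
have [e1 e10 [G inG]] := section_local_fset s Ut.
have [rho rho0 hrho] := section_locally_gen s G Ut.
have [rU [rU0 hrU]] := oset_open Ut.
set r := Num.min rho (Num.min e1 rU).
have r0 : 0 < r by rewrite !lt_min rho0 e10 rU0.
pose V := Opens (@is_openC_ball R t r).
have Vr t' : oset V t' -> [/\ cmod (t' - t) < rho, cmod (t' - t) < e1
    & cmod (t' - t) < rU].
  by move=> /= h; split; apply: lt_le_trans h _; rewrite /r !ge_min lexx ?orbT.
have VU : oset V `<=` oset U by move=> z /Vr [_ _ /hrU].
have Vt : oset V t by rewrite /= subrr cmod0.
rewrite -(@endo_restr U V s (sec_restr s [set c | c \in G] VU)) //.
- rewrite (@endo_restr_sum U V s VU t e G Vt) ?fset_uniq //; last first.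
    by move=> c cG t' /Vr [h _ _]; apply: hrho.
  apply/esym/fsbigTE => c cG; have -> : s t c = 0; last by rewrite mul0r.
  by apply/eqP; apply: contraT => /(inG t c); rewrite subrr cmod0 (negbTE cG) => /(_ e10).
- move=> t' c' Vt'; have [_ ht' _] := Vr _ Vt'; rewrite /= /restr.
  case: asboolP => [//|h]; apply/esym/eqP; apply: contraT => /(inG t' c' ht').
  by move=> hc; case: h.
Qed.

End Endomorphism.

Lemma fsum_conv_fset (R : realType) (f g : R[i] -> R[i]) (G : {fset R[i]}) e :
  (forall c, g c != 0 -> c \in G) ->
  \sum_(c \in [set: R[i]]) f c * g (e - c) = \sum_(c <- G) f (e - c) * g c.
Proof.
move=> hG; rewrite (reindex_fsbigT (fun c => e - c)); last first.
  by exists (fun c => e - c) => c; exact: subKr.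
under eq_fsbigr do rewrite subKr.
apply: fsbigTE => c cG; have -> : g c = 0; last by rewrite mulr0.
by apply/eqP; apply: contraT => /hG; rewrite (negbTE cG).
Qed.

Section Convolution.
Local Open Scope complex_scope.
Variable R : realType.
Local Notation C := R[i].
Variable Sig : set (sector R).
Local Notation Z := (Sdual Sig).
Hypothesis Sig_sectoroid : sectoroid Sig.
Variable f : C -> C.
Hypothesis f_Lambda0 : Lambda0 Sig f.

Definition conv_fun (U : opens R) (s : section Sig U) : C -> C -> C :=
  fun t e => if `[< Z (t - e) >] then \sum_(c \in [set: C]) f c * s t (e - c) else 0.

Lemma conv_fun_supp (U : opens R) (s : section Sig U) t e :
  conv_fun s t e != 0 -> oset U t /\ Z (t - e).
Proof.
rewrite /conv_fun; case: asboolP => [Zte|]; last by rewrite eqxx.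
case/(fsbigN1 (f := fun _ c => f c * s t (e - c)) (x := tt)) => c _.
case: (sfunP s) => hsupp _ _.
by have [->|/hsupp [] //] := eqVneq (s t (e - c)) 0; rewrite mulr0 eqxx.
Qed.

Lemma conv_fun_locally_const (U : opens R) (s : section Sig U) t e :
  oset U t -> Z (t - e) -> exists e' : R, 0 < e' /\
    forall t', cmod (t' - t) < e' -> Z (t' - e) -> conv_fun s t' e = conv_fun s t e.
Proof.
move=> Ut Zte; have [e1 e10 [G inG]] := section_local_fset s Ut.
have [rho rho0 hrho] := section_locally_gen s G Ut.
exists (Num.min rho e1); split; first by rewrite lt_min rho0 e10.
move=> t' /[dup] + /lt_le_trans ht'; rewrite lt_min => /andP[h1 h2] Zt'e.
have inGt c : s t c != 0 -> c \in G by apply: inG; rewrite subrr cmod0.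
have inGt' c : s t' c != 0 -> c \in G by apply: inG.
rewrite /conv_fun !asboolT // (fsum_conv_fset _ _ inGt') (fsum_conv_fset _ _ inGt).
rewrite big_seq [RHS]big_seq; apply: eq_bigr => c cG; rewrite hrho // /gen_fun eqxx.
have [->|/(proj1 f_Lambda0) Zec] := eqVneq (f (e - c)) 0; first by rewrite !mul0r.
by rewrite asboolT // -(subrK e t') -addrA; apply: SdualD.
Qed.

(* The image of a section near [t] only meets summands [c + x] with [x] in a
   finite set and [c] in the support of [f], at bounded distance by salience. *)
Lemma conv_fun_locally_finite (U : opens R) (s : section Sig U) t :
  oset U t -> exists e : R, 0 < e /\
    finite_set [set c | exists t', cmod (t' - t) < e /\ conv_fun s t' c != 0].
Proof.
move=> Ut; case: f_Lambda0 => fsupp ffin.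
have [e1 e10 [G inG]] := section_local_fset s Ut.
have [M M0 hM] := Sdual_salient Sig_sectoroid.
set B := M * (cmod t + e1 + \sum_(x <- G) cmod x).
exists e1; split => //.
apply: (sub_finite_set
  (B := [set x + y | x in [set c | cmod c <= B /\ f c != 0] & y in [set` G]])).
  move=> e [t' [ht' cne]]; move: cne; rewrite /conv_fun.
  case: asboolP => [Zt'e|]; last by rewrite eqxx.
  case/(fsbigN1 (f := fun _ c => f c * s t' (e - c)) (x := tt)) => c _.
  have [->|sne] := eqVneq (s t' (e - c)) 0; first by rewrite mulr0 eqxx.
  have [->|fne] := eqVneq (f c) 0; first by rewrite mul0r eqxx.
  move=> _; have c'G := inG _ _ ht' sne.
  exists c; last by exists (e - c) => //; rewrite addrC subrK.
  split => //; apply: le_trans (hM c (t' - (e - c)) (fsupp _ fne) _) _.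
    by have -> : t' - (e - c) - c = t' - e by ring.
  rewrite /B ler_wpM2l //.
  have h1 : cmod (t' - (e - c)) <= cmod (t' - t) + cmod t + cmod (e - c).
    have -> : t' - (e - c) = (t' - t) + t + (- (e - c)) by ring.
    by apply: le_trans (cmodD _ _) _; rewrite cmodN lerD2r; exact: cmodD.
  have h2 : cmod (e - c) <= \sum_(x <- G) cmod x.
    rewrite (bigD1_seq (e - c)) ?fset_uniq //=; apply: ler_wpDr => //.
    by apply: sumr_ge0 => i _; exact: cmod_ge0.
  have h3 := ltW ht'; lra.
apply: (@finite_image2 _ _ _ _ _ (fun x y => x + y)); last exact: finite_fset.
by apply: sub_finite_set (ffin B) => c [].
Qed.

Lemma is_section_conv (U : opens R) (s : section Sig U) :
  is_section Sig (oset U) (conv_fun s).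
Proof.
split; [exact: conv_fun_supp | exact: conv_fun_locally_const |].
exact: conv_fun_locally_finite.
Qed.

Definition conv_endo : endo Sig :=
  fun U s => @Section_ R Sig U (conv_fun s) (is_section_conv s).

Lemma conv_endo_equiv : is_equiv_endo conv_endo.
Proof.
split.
- move=> U s1 s2 s3 k E t e; rewrite /= /conv_fun.
  case: asboolP => _; last by rewrite mulr0 addr0.
  have [G1 h1] := section_fset s1 t; have [G2 h2] := section_fset s2 t.
  have hG1 c : s1 t c != 0 -> c \in (G1 `|` G2)%fset by move/h1; rewrite inE => ->.
  have hG2 c : s2 t c != 0 -> c \in (G1 `|` G2)%fset.
    by move/h2; rewrite inE orbC => ->.
  have hG3 c : s3 t c != 0 -> c \in (G1 `|` G2)%fset.
    rewrite E; have [/eqP s10|/hG1 //] := boolP (s1 t c == 0).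
    by rewrite s10 mulr0 add0r => /hG2.
  rewrite !(fsum_conv_fset _ _ (G := (G1 `|` G2)%fset)) //.
  rewrite mulr_sumr -big_split /=; apply: eq_bigr => c _.
  by rewrite E; ring.
- move=> U V VU s s' E t e Vt; rewrite /= /conv_fun.
  by case: asboolP => // _; apply: eq_fsbigr => c _; rewrite E.
- move=> a U U' HU s s' E t e; rewrite /= /conv_fun.
  have -> : t + a - (e + a) = t - e by ring.
  case: asboolP => // _; apply: eq_fsbigr => c _; rewrite E.
  by have -> : e - c + a = e + a - c by ring.
Qed.

End Convolution.

Section Symbol.
Local Open Scope complex_scope.
Variable R : realType.
Local Notation C := R[i].
Variable Sig : set (sector R).
Local Notation Z := (Sdual Sig).

(* The coefficient of [T^e] is read off at the apex [e] of [S^vee + e], on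
   which the component [e] of the image of the generator is constant. *)
Definition symbol (phi : endo Sig) (e : C) : C := endo_coef phi e e.

Lemma monom_Lambda0 d : Z d -> Lambda0 Sig (monom d).
Proof.
move=> Zd; split.
- by move=> c; rewrite /monom; case: (c =P d) => [->|]; rewrite ?eqxx.
- move=> n; apply: sub_finite_set (finite_set1 d) => c [_].
  by rewrite /monom; case: (c =P d) => //; rewrite eqxx.
Qed.

Lemma symbol_Lambda0 phi : is_equiv_endo phi -> Lambda0 Sig (symbol phi).
Proof.
move=> phi_equiv; split; first by move=> c /(endo_coef_supp_Sdual phi_equiv).
move=> n; apply: (sub_finite_set (B := [set c | symbol phi c != 0] `&`
  [set c | cmod c <= n])); first by move=> c [h1 h2]; split.
apply: locally_finite_disc => t.
case: (sfunP (phi (planeT R) (gen Sig 1 0))) => _ _ /(_ t I) [e [e0 fe]].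
by exists e => //; apply: sub_finite_set fe => c [h1 h2]; exists c.
Qed.

Lemma symbol_inj phi psi : is_equiv_endo phi -> is_equiv_endo psi ->
  symbol phi = symbol psi -> endo_eq phi psi.
Proof.
move=> phi_equiv psi_equiv E U s t c.
rewrite (endo_expand phi_equiv) (endo_expand psi_equiv); apply: eq_fsbigr => x _.
by rewrite (endo_coefE phi) (endo_coefE psi) -/(symbol _ _) E.
Qed.

Lemma symbol_comp phi psi : is_equiv_endo phi -> is_equiv_endo psi ->
  symbol (fun U s => phi U (psi U s)) = lam_conv (symbol phi) (symbol psi).
Proof.
move=> phi_equiv psi_equiv; apply/funext => e.
rewrite /symbol /endo_coef (endo_expand phi_equiv) /lam_conv.
rewrite (reindex_fsbigT (fun c => e - c)); last first.
  by exists (fun c => e - c) => c; exact: subKr.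
apply: eq_fsbigr => c _; rewrite /symbol subKr -/(endo_coef psi e (e - c)).
rewrite (endo_coefE psi) subKr; case: asboolP => Zc; first by rewrite mulrC.
have /eqP phi0 : endo_coef phi c c == 0.
  by apply: contraT => /(endo_coef_supp_Sdual phi_equiv).
by rewrite /endo_coef in phi0 *; rewrite phi0 !mul0r.
Qed.

Lemma symbol_id : symbol (fun U s => s) = monom 0.
Proof.
apply/funext => e; rewrite /symbol /endo_coef /= /gen_fun /monom subr0.
by case: (e =P 0) => [->|] //=; rewrite asboolT //; exact: Sdual0.
Qed.

Lemma symbol_conv_endo (HS : sectoroid Sig) f (Hf : Lambda0 Sig f) :
  symbol (conv_endo HS Hf) = f.
Proof.
apply/funext => e; rewrite /symbol /endo_coef /= /conv_fun subrr asboolT; last exact: Sdual0.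
rewrite (fsum_conv_fset _ _ (G := [fset 0]%fset)); last first.
  by move=> c; rewrite /= /gen_fun; case: (c =P 0) => [->|] //=; rewrite ?inE ?eqxx.
rewrite big_seq_fset1 subr0 /= /gen_fun eqxx /= subr0.
case: asboolP => Ze; first by rewrite mulr1.
by rewrite mulr0; apply/esym/eqP; apply: contraT => /(proj1 Hf).
Qed.

Lemma conv_endo_monom_shift (HS : sectoroid Sig) d (Zd : Z d) :
  shift_morph d (conv_endo HS (monom_Lambda0 Zd)).
Proof.
move=> U s t e; rewrite /= /conv_fun; case: asboolP => // _.
rewrite (fsbigTE [fset d]%fset); last first.
  by move=> c; rewrite inE /monom => /negbTE ->; rewrite mul0r.
by rewrite big_seq_fset1 /monom eqxx mul1r.
Qed.

Lemma symbol_shift d phi : Z d -> shift_morph d phi -> symbol phi = monom d.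
Proof.
move=> Zd phi_shift; apply/funext => e.
rewrite /symbol /endo_coef phi_shift subrr asboolT; last exact: Sdual0.
rewrite /= /gen_fun /monom subr0 subr_eq0.
by case: (e =P d) => [->|] //=; rewrite asboolT.
Qed.

End Symbol.

Theorem mainTheorem9 (R : realType) (Sig : set (sector R)) :
  sectoroid Sig ->
  exists Phi : endo Sig -> (R[i] -> R[i]),
    (forall phi, is_equiv_endo phi -> Lambda0 Sig (Phi phi)) /\
        (forall phi psi, is_equiv_endo phi -> is_equiv_endo psi ->
           Phi phi = Phi psi -> endo_eq phi psi) /\
        (forall f, Lambda0 Sig f -> exists phi, is_equiv_endo phi /\ Phi phi = f) /\
        (forall phi psi chi, is_equiv_endo phi -> is_equiv_endo psi ->
           is_equiv_endo chi ->
           (forall U s t c, chi U s t c = phi U s t c + psi U s t c) ->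
           Phi chi = (fun e => Phi phi e + Phi psi e)) /\
        (forall phi psi, is_equiv_endo phi -> is_equiv_endo psi ->
           Phi (fun U s => phi U (psi U s)) = lam_conv (Phi phi) (Phi psi)) /\
        Phi (fun U s => s) = monom 0 /\
        (forall d, Sdual Sig d ->
           (exists phi, is_equiv_endo phi /\ shift_morph (Sig:=Sig) d phi) /\
           (forall phi, is_equiv_endo phi -> shift_morph (Sig:=Sig) d phi ->
              Phi phi = monom d)).
Proof.
move=> HS; exists (@symbol R Sig).
split; [exact: symbol_Lambda0 | split; [exact: symbol_inj | split]].
  by move=> f Hf; exists (conv_endo HS Hf); rewrite symbol_conv_endo;
    split; first exact: conv_endo_equiv.
split; first by move=> phi psi chi _ _ _ E; apply/funext => e; rewrite /symbol /endo_coef E.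
split; first exact: symbol_comp.
split; first exact: symbol_id.
move=> d Zd; split; last by move=> phi _; exact: symbol_shift.
exists (conv_endo HS (monom_Lambda0 Zd)).
by split; [exact: conv_endo_equiv | exact: conv_endo_monom_shift].
Qed.
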